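(* Let $\{x,y\}$ be Cartesian coordinates on $\mathbb{E}^2$, $z=\frac12(x-iy)$, $\bar z=\frac12(x+iy)$, and let $\xi=\xi_{\{\mu\}}$ be a GCKV with parameters $\mu=(\mu_0,\mu_1,\mu_2)\in\mathbb{C}^3$. Let $\gamma,\delta\in\mathbb{C}$ be any pair with $\frac12\delta^2\mu_2-\gamma\delta\mu_1+\gamma^2\mu_0=1$ and set $\alpha=\frac12(\delta\mu_2-\gamma\mu_1)$, $\beta=\frac12\delta\mu_1-\gamma\mu_0$. Then: (i) In the coordinate system $\{\omega,\bar\omega\}$ defined by $\omega=(\alpha z+\beta)/(\gamma z+\delta)$, $\xi$ takes the canonical form $\xi=(\mu_0'+\omega^2)\partial_\omega+(\bar\mu_0'+\bar\omega^2)\partial_{\bar\omega}$, where $4\mu_0':=2\mu_0\mu_2-\mu_1^2$. (ii) Any other coordinate system $\{\omega',\bar\omega'\}$ (obtained from $\omega$ by a Möbius coordinate change) in which $\xi$ is in canonical form is related to $\{\omega,\bar\omega\}$ by $\omega'=(\delta'\omega-\gamma'\mu_0')/(\gamma'\omega+\delta')$ with $\delta'^2+\mu_0'\gamma'^2=1$. (iii) Write $4\mu_0'=Qe^{-2i\theta}$ with $Q\ge0$, $\theta\in[0,\pi)$ ($\theta$ arbitrary if $Q=0$). Define the complex coordinate $\zeta:=\frac12(v_1+iv_2)$ by $$\omega=\frac{i\sqrt Q\,e^{-i\theta}}{2}\,\frac{1+e^{2i\sqrt Q e^{-i\theta}\zeta}}{1-e^{2i\sqrt Q e^{-i\theta}\zeta}}\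 \ (Q>0),\qquad \omega=-\frac{1}{2\zeta}\ \ (Q=0).$$ Then the (locally defined) real coordinates $\{v_1,v_2\}$ are adapted to $\xi$ and to $\xi^\perp:=\xi_{\{i\mu\}}$, namely $\xi=\partial_{v_1}$ and $\xi^\perp=\partial_{v_2}$. (iv) For $u=(u_0,u_1,u_2,u_3)\in\mathbb{R}^4\setminus\{0\}$, the metric $g_u:=\Omega_u^{-2}(dx^2+dy^2)$, $\Omega_u:=u_0(1+z\bar z)+u_1(1-z\bar z)+u_2(z+\bar z)+u_3\,i(z-\bar z)$, takes in the coordinates $\{v_1,v_2\}$ the form $$g_u=\frac{dv_1^2+dv_2^2}{\big((u_0'-u_1')f_++(u_0'+u_1')f_-+u_2'f_2+u_3'f_3\big)^2},$$ where $u'=(u_0',u_1',u_2',u_3')^T:=\Lambda\,(u_0,u_1,u_2,u_3)^T$ and $\Lambda$, $f_\pm,f_2,f_3$ are as in the context.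
   Context: A GCKV with parameters $\mu\in\mathbb{C}^3$ is $\xi_{\{\mu\}}=(\mu_0+\mu_1z+\frac12\mu_2z^2)\partial_z+(\bar\mu_0+\bar\mu_1\bar z+\frac12\bar\mu_2\bar z^2)\partial_{\bar z}$ (the conformal Killing vectors of $dx^2+dy^2$ that extend smoothly to the Riemann sphere); in a complex coordinate $w$, $\xi$ is in canonical form if it reads $(c+w^2)\partial_w+(\bar c+\bar w^2)\partial_{\bar w}$ for some $c\in\mathbb{C}$. Functions: $h_1:=v_1\cos\theta+v_2\sin\theta$, $h_2:=v_2\cos\theta-v_1\sin\theta$; for $Q>0$: $f_+=\frac14(\cosh(\sqrt Q h_2)+\cos(\sqrt Q h_1))$, $f_-=\frac1Q(\cosh(\sqrt Q h_2)-\cos(\sqrt Q h_1))$, $f_2=\frac1{\sqrt Q}(\sin\theta\sinh(\sqrt Q h_2)-\cos\theta\sin(\sqrt Q h_1))$, $f_3=-\frac1{\sqrt Q}(\cos\theta\sinh(\sqrt Q h_2)+\sin\theta\sin(\sqrt Q h_1))$; for $Q=0$: $f_+=\frac12$, $f_-=\frac12(v_1^2+v_2^2)$, $f_2=-v_1$, $f_3=-v_2$. $\Lambda=\frac12 N$ with the rows of $N$: row 0: $\big(\alpha\bar\alpha+\beta\bar\beta+\gamma\bar\gamma+\delta\bar\delta,\ \alpha\bar\alpha-\beta\bar\beta+\gamma\bar\gamma-\delta\bar\delta,\ -\alpha\bar\beta-\beta\bar\alpha-\gamma\bar\delta-\delta\bar\gamma,\ i(\alpha\bar\beta-\beta\bar\alpha+\gamma\bar\delta-\delta\bar\gamma)\big)$;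 row 1: $\big(\alpha\bar\alpha+\beta\bar\beta-\gamma\bar\gamma-\delta\bar\delta,\ \alpha\bar\alpha-\beta\bar\beta-\gamma\bar\gamma+\delta\bar\delta,\ -\alpha\bar\beta-\beta\bar\alpha+\gamma\bar\delta+\delta\bar\gamma,\ i(\alpha\bar\beta-\beta\bar\alpha-\gamma\bar\delta+\delta\bar\gamma)\big)$; row 2: $\big(-(\alpha\bar\gamma+\beta\bar\delta+\gamma\bar\alpha+\delta\bar\beta),\ -\alpha\bar\gamma+\beta\bar\delta-\gamma\bar\alpha+\delta\bar\beta,\ \alpha\bar\delta+\beta\bar\gamma+\gamma\bar\beta+\delta\bar\alpha,\ i(-\alpha\bar\delta+\beta\bar\gamma-\gamma\bar\beta+\delta\bar\alpha)\big)$; row 3: $\big(i(-\alpha\bar\gamma-\beta\bar\delta+\gamma\bar\alpha+\delta\bar\beta),\ i(-\alpha\bar\gamma+\beta\bar\delta+\gamma\bar\alpha-\delta\bar\beta),\ i(\alpha\bar\delta+\beta\bar\gamma-\gamma\bar\beta-\delta\bar\alpha),\ \alpha\bar\delta-\beta\bar\gamma-\gamma\bar\beta+\delta\bar\alpha\big)$. *)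

From Stdlib Require Import Reals.
From Coquelicot Require Import Coquelicot.

Open Scope R_scope.

(** Points of E^2 are pairs p = (x, y) of Cartesian coordinates; a (real)
    vector field X assigns to p the components (X^x, X^y) of X^x d_x + X^y d_y. *)

Definition zc (p : R * R) : C := (fst p / 2, - snd p / 2).

Definition dir_deriv (f : R * R -> R) (p a : R * R) (l : R) : Prop :=
  is_derive (fun t : R => f (fst p + t * fst a, snd p + t * snd a)) 0 l.

Definition deriv_along (X : R * R -> R * R) (f : R * R -> R) (p : R * R) (l : R)
  : Prop := dir_deriv f p (X p) l.

Definition cderiv_along (X : R * R -> R * R) (f : R * R -> C) (p : R * R) (l : C)
  : Prop :=
  deriv_along X (fun q => Re (f q)) p (Re l) /\ deriv_along X (fun q => Im (f q)) p (Im l).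

Open Scope C_scope.

Definition gckv_coef (mu0 mu1 mu2 : C) (z : C) : C :=
  mu0 + mu1 * z + / RtoC 2 * mu2 * z ^ 2.

(** The GCKV xi_{mu} = F d_z + conj(F) d_zbar, F = gckv_coef mu, as a real
    vector field on E^2.  With z = (x - i y)/2 one has x = z + zbar,
    y = i (z - zbar), so d_z = d_x + i d_y and
    F d_z + conj F d_zbar = 2 Re F d_x - 2 Im F d_y. Equivalently, this is the
    unique real vector field X with X(z) = F(z). *)
Definition gckv (mu0 mu1 mu2 : C) (p : R * R) : R * R :=
  ((2 * Re (gckv_coef mu0 mu1 mu2 (zc p)))%R, (- 2 * Im (gckv_coef mu0 mu1 mu2 (zc p)))%R).

Definition cexp (w : C) : C := ((exp (Re w) * cos (Im w))%R, (exp (Re w) * sin (Im w))%R).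

Definition mu0p (mu0 mu1 mu2 : C) : C := / RtoC 4 * (RtoC 2 * mu0 * mu2 - mu1 ^ 2).

Definition omega_of_zeta (Q theta : R) (zeta : C) : C :=
  if Rle_dec Q 0 then - / (RtoC 2 * zeta)
  else
    let k := RtoC (sqrt Q) * cexp ((0%R, (- theta)%R)) in
    let e := cexp (RtoC 2 * Ci * k * zeta) in
    Ci * k / RtoC 2 * ((RtoC 1 + e) / (RtoC 1 - e)).

Definition omega_of_zeta_defined (Q theta : R) (zeta : C) : Prop :=
  if Rle_dec Q 0 then zeta <> RtoC 0
  else
    let k := RtoC (sqrt Q) * cexp ((0%R, (- theta)%R)) in
    RtoC 1 - cexp (RtoC 2 * Ci * k * zeta) <> RtoC 0.

Close Scope C_scope.

Definition h1 (theta v1 v2 : R) : R := v1 * cos theta + v2 * sin theta.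
Definition h2 (theta v1 v2 : R) : R := v2 * cos theta - v1 * sin theta.

Definition f_plus (Q theta v1 v2 : R) : R :=
  if Rle_dec Q 0 then 1 / 2
  else / 4 * (cosh (sqrt Q * h2 theta v1 v2) + cos (sqrt Q * h1 theta v1 v2)).
Definition f_minus (Q theta v1 v2 : R) : R :=
  if Rle_dec Q 0 then 1 / 2 * (v1 ^ 2 + v2 ^ 2)
  else / Q * (cosh (sqrt Q * h2 theta v1 v2) - cos (sqrt Q * h1 theta v1 v2)).
Definition f_2 (Q theta v1 v2 : R) : R :=
  if Rle_dec Q 0 then - v1
  else / sqrt Q * (sin theta * sinh (sqrt Q * h2 theta v1 v2)
                   - cos theta * sin (sqrt Q * h1 theta v1 v2)).
Definition f_3 (Q theta v1 v2 : R) : R :=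
  if Rle_dec Q 0 then - v2
  else - / sqrt Q * (cos theta * sinh (sqrt Q * h2 theta v1 v2)
                     + sin theta * sin (sqrt Q * h1 theta v1 v2)).

Open Scope C_scope.

Definition Nmat (a b g d : C) (i j : nat) : C :=
  let a' := Cconj a in let b' := Cconj b in let g' := Cconj g in let d' := Cconj d in
  match i, j with
  | 0%nat, 0%nat => a*a' + b*b' + g*g' + d*d'
  | 0%nat, 1%nat => a*a' - b*b' + g*g' - d*d'
  | 0%nat, 2%nat => - (a*b') - b*a' - g*d' - d*g'
  | 0%nat, 3%nat => Ci * (a*b' - b*a' + g*d' - d*g')
  | 1%nat, 0%nat => a*a' + b*b' - g*g' - d*d'
  | 1%nat, 1%nat => a*a' - b*b' - g*g' + d*d'
  | 1%nat, 2%nat => - (a*b') - b*a' + g*d' + d*g'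
  | 1%nat, 3%nat => Ci * (a*b' - b*a' - g*d' + d*g')
  | 2%nat, 0%nat => - (a*g' + b*d' + g*a' + d*b')
  | 2%nat, 1%nat => - (a*g') + b*d' - g*a' + d*b'
  | 2%nat, 2%nat => a*d' + b*g' + g*b' + d*a'
  | 2%nat, 3%nat => Ci * (- (a*d') + b*g' - g*b' + d*a')
  | 3%nat, 0%nat => Ci * (- (a*g') - b*d' + g*a' + d*b')
  | 3%nat, 1%nat => Ci * (- (a*g') + b*d' + g*a' - d*b')
  | 3%nat, 2%nat => Ci * (a*d' + b*g' - g*b' - d*a')
  | 3%nat, 3%nat => a*d' - b*g' - g*b' + d*a'
  | _, _ => 0
  end.

Definition uprime (a b g d : C) (u0 u1 u2 u3 : R) (i : nat) : C :=
  / RtoC 2 * (Nmat a b g d i 0 * RtoC u0 + Nmat a b g d i 1 * RtoC u1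
              + Nmat a b g d i 2 * RtoC u2 + Nmat a b g d i 3 * RtoC u3).

Definition Omega (u0 u1 u2 u3 : R) (z : C) : C :=
  RtoC u0 * (RtoC 1 + z * Cconj z) + RtoC u1 * (RtoC 1 - z * Cconj z)
  + RtoC u2 * (z + Cconj z) + RtoC u3 * (Ci * (z - Cconj z)).

Close Scope C_scope.

(* The Moebius map z |-> om = (alp z + bet) / (gam z + del) has determinant
   alp del - bet gam = 1 and carries the coefficient mu0 + mu1 z + mu2 z^2 / 2 of xi to
   mu0' + om^2, which is (i).  For (ii), if xi reads c0 + om'^2 in om' = M(om), comparing
   with (i) gives a quadratic equation in om that holds on an open set, so its three
   coefficients vanish, and this forces M into the stated one-parameter family.  For (iii),
   om(zeta) solves the Riccati equation d om / d zeta = 2 (mu0' + om^2), so xi(zeta) = 1/2,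
   i.e. xi = d_v1; since xi_perp = i xi on holomorphic functions, xi_perp = d_v2.  For (iv),
   Omega_u(z) = |gam z + del|^2 H(om) where H is the Hermitian form with coefficients
   u' = Lambda u, and H(om(zeta)) is, up to the factor |d om / d zeta|^-1, the
   combination of f_+, f_-, f_2, f_3 in the denominator. *)

From Stdlib Require Import Reals Lra Classical.
From Coquelicot Require Import Coquelicot.

Open Scope R_scope.

Lemma is_derive_eq (f : R -> R) (x l l' : R) : is_derive f x l -> l = l' -> is_derive f x l'.
Proof. now intros H <-. Qed.

Lemma is_derive_Rmult (f g : R -> R) (x df dg : R) :
  is_derive f x df -> is_derive g x dg ->
  is_derive (fun y => f y * g y) x (df * g x + f x * dg).
Proof. intros Hf Hg. exact (is_derive_mult f g x df dg Hf Hg Rmult_comm). Qed.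

Open Scope C_scope.

(** * Complex numbers *)

Lemma Cmult_eq_0_r (x y : C) : x <> 0 -> x * y = 0 -> y = 0.
Proof.
  intros Hx H. destruct (Ceq_dec y 0) as [|Hy]; [assumption|].
  now destruct (Cmult_neq_0 x y Hx Hy).
Qed.

Lemma Cminus_eq_0 (u v : C) : u - v = 0 -> u = v.
Proof. intros H. transitivity (u - v + v); [ring|]. rewrite H. ring. Qed.

Lemma Cconj_neq_0 (x : C) : x <> 0 -> Cconj x <> 0.
Proof.
  intros H Z. apply H. rewrite <- (Cconj_conj x), Z.
  apply injective_projections; simpl; ring.
Qed.

Lemma Ci_sq : Ci * Ci = - 1.
Proof. apply injective_projections; simpl; ring. Qed.

Lemma norm2_conj (z : C) : RtoC (Re z ^ 2 + Im z ^ 2)%R = z * Cconj z.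
Proof. destruct z. unfold Cconj, Cmult, RtoC, Re, Im; simpl. f_equal; ring. Qed.

Lemma cexp_neq_0 (w : C) : cexp w <> 0.
Proof.
  unfold cexp. intros Z. injection Z as Z1 Z2.
  pose proof (exp_pos (Re w)) as Hexp. pose proof (sin2_cos2 (Im w)) as Hsc. unfold Rsqr in Hsc.
  apply Rmult_integral in Z1 as [Z1|Z1]; [lra|].
  apply Rmult_integral in Z2 as [Z2|Z2]; [lra|].
  rewrite Z1, Z2 in Hsc. lra.
Qed.

Lemma C_sqrt_exists (w : C) : exists s : C, s * s = w.
Proof.
  destruct w as [x y].
  set (r := sqrt (x ^ 2 + y ^ 2)).
  assert (Hr : (r * r = x ^ 2 + y ^ 2)%R) by (apply sqrt_sqrt; nra).
  assert (Hr0 : (0 <= r)%R) by apply sqrt_pos.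
  assert (Hrx : (- r <= x <= r)%R).
  { split; destruct (Rle_dec (- r) x), (Rle_dec x r); try lra; exfalso; nra. }
  set (s1 := sqrt ((r + x) / 2)). set (s2 := sqrt ((r - x) / 2)).
  assert (S1 : (s1 * s1 = (r + x) / 2)%R) by (apply sqrt_sqrt; lra).
  assert (S2 : (s2 * s2 = (r - x) / 2)%R) by (apply sqrt_sqrt; lra).
  assert (P12 : ((s1 * s2) * (s1 * s2) = y * y / 4)%R).
  { replace ((s1 * s2) * (s1 * s2))%R with ((s1 * s1) * (s2 * s2))%R by ring.
    rewrite S1, S2. nra. }
  assert (Hp : (0 <= s1 * s2)%R) by (apply Rmult_le_pos; apply sqrt_pos).
  destruct (Rle_dec 0 y) as [Hy|Hy].
  - exists (s1, s2). unfold Cmult; simpl. f_equal; nra.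
  - exists (s1, (- s2)%R). unfold Cmult; simpl. f_equal; nra.
Qed.

(** * Derivatives of complex-valued functions of a real variable *)

Definition is_cderive (h : R -> C) (t : R) (l : C) : Prop :=
  is_derive (fun s => Re (h s)) t (Re l) /\ is_derive (fun s => Im (h s)) t (Im l).

Lemma is_cderive_eq (h : R -> C) (t : R) (l l' : C) :
  is_cderive h t l -> l = l' -> is_cderive h t l'.
Proof. now intros H <-. Qed.

Lemma is_cderive_unique (h : R -> C) (t : R) (l1 l2 : C) :
  is_cderive h t l1 -> is_cderive h t l2 -> l1 = l2.
Proof.
  intros [A1 A2] [B1 B2].
  apply is_derive_unique in A1, A2, B1, B2.
  destruct l1, l2; unfold Re, Im in *; simpl in *; congruence.
Qed.

Lemma is_cderive_ext_loc (f g : R -> C) (t : R) (l : C) :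
  locally t (fun s => f s = g s) -> is_cderive f t l -> is_cderive g t l.
Proof.
  intros Hfg [H1 H2]; split; eapply is_derive_ext_loc; try eassumption;
    eapply filter_imp; try exact Hfg; now intros s ->.
Qed.

Lemma is_cderive_const (c : C) (t : R) : is_cderive (fun _ => c) t 0.
Proof. split; exact (is_derive_const _ _). Qed.

Lemma is_cderive_plus (f g : R -> C) (t : R) (lf lg : C) :
  is_cderive f t lf -> is_cderive g t lg -> is_cderive (fun s => f s + g s) t (lf + lg).
Proof.
  intros [F1 F2] [G1 G2].
  split; [exact (is_derive_plus _ _ _ _ _ F1 G1) | exact (is_derive_plus _ _ _ _ _ F2 G2)].
Qed.

Lemma is_cderive_opp (f : R -> C) (t : R) (l : C) :
  is_cderive f t l -> is_cderive (fun s => - f s) t (- l).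
Proof.
  intros [F1 F2]. split; [exact (is_derive_opp _ _ _ F1) | exact (is_derive_opp _ _ _ F2)].
Qed.

Lemma is_cderive_minus (f g : R -> C) (t : R) (lf lg : C) :
  is_cderive f t lf -> is_cderive g t lg -> is_cderive (fun s => f s - g s) t (lf - lg).
Proof. intros; apply is_cderive_plus, is_cderive_opp; assumption. Qed.

Lemma is_cderive_mult (f g : R -> C) (t : R) (lf lg : C) :
  is_cderive f t lf -> is_cderive g t lg ->
  is_cderive (fun s => f s * g s) t (lf * g t + f t * lg).
Proof.
  intros [F1 F2] [G1 G2]; split; simpl; eapply is_derive_eq.
  - exact (is_derive_minus _ _ _ _ _
             (is_derive_Rmult _ _ _ _ _ F1 G1) (is_derive_Rmult _ _ _ _ _ F2 G2)).
  - unfold Re, Im, minus, plus, opp; simpl; ring.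
  - exact (is_derive_plus _ _ _ _ _
             (is_derive_Rmult _ _ _ _ _ F1 G2) (is_derive_Rmult _ _ _ _ _ F2 G1)).
  - unfold Re, Im, minus, plus, opp; simpl; ring.
Qed.

Lemma is_cderive_inv (f : R -> C) (t : R) (l : C) :
  is_cderive f t l -> f t <> 0 -> is_cderive (fun s => / f s) t (- l / f t ^ 2).
Proof.
  intros [F1 F2] Hn.
  assert (Hd : (fst (f t) ^ 2 + snd (f t) ^ 2 <> 0)%R).
  { contradict Hn. destruct (f t) as [a b]; simpl in *.
    apply injective_projections; simpl; nra. }
  assert (Hs : is_derive (fun s => fst (f s) ^ 2 + snd (f s) ^ 2)%R t
                 (2 * fst (f t) * Re l + 2 * snd (f t) * Im l)%R).
  { eapply is_derive_eq.
    - exact (is_derive_plus _ _ _ _ _ (is_derive_pow _ 2 _ _ F1) (is_derive_pow _ 2 _ _ F2)).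
    - unfold plus, Re, Im; simpl; ring. }
  split; unfold Cinv; simpl; eapply is_derive_eq.
  - exact (is_derive_Rmult _ _ _ _ _ F1 (is_derive_inv _ _ _ Hs Hd)).
  - destruct l as [c d]; unfold Re, Im in *; simpl in *.
    field; simpl in Hd; repeat split; intro E; apply Hd; nra.
  - exact (is_derive_Rmult _ _ _ _ _ (is_derive_opp _ _ _ F2) (is_derive_inv _ _ _ Hs Hd)).
  - destruct l as [c d]; unfold Re, Im, opp in *; simpl in *.
    field; simpl in Hd; repeat split; intro E; apply Hd; nra.
Qed.

Lemma is_cderive_div (f g : R -> C) (t : R) (lf lg : C) :
  is_cderive f t lf -> is_cderive g t lg -> g t <> 0 ->
  is_cderive (fun s => f s / g s) t ((lf * g t - f t * lg) / g t ^ 2).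
Proof.
  intros F G Hn. eapply is_cderive_eq.
  - exact (is_cderive_mult _ _ _ _ _ F (is_cderive_inv _ _ _ G Hn)).
  - cbv beta. field. exact Hn.
Qed.

Lemma is_cderive_scal (c : C) (f : R -> C) (t : R) (l : C) :
  is_cderive f t l -> is_cderive (fun s => c * f s) t (c * l).
Proof.
  intros F. eapply is_cderive_eq.
  - exact (is_cderive_mult _ _ _ _ _ (is_cderive_const c t) F).
  - cbv beta. ring.
Qed.

Lemma is_cderive_cexp (f : R -> C) (t : R) (l : C) :
  is_cderive f t l -> is_cderive (fun s => cexp (f s)) t (cexp (f t) * l).
Proof.
  intros [F1 F2]; split; unfold cexp; simpl; eapply is_derive_eq.
  - exact (is_derive_Rmult _ _ _ _ _ (is_derive_comp exp _ _ _ _ (is_derive_exp _) F1)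
             (is_derive_comp cos _ _ _ _ (is_derive_cos _) F2)).
  - unfold Re, Im, scal; simpl; unfold mult; simpl; ring.
  - exact (is_derive_Rmult _ _ _ _ _ (is_derive_comp exp _ _ _ _ (is_derive_exp _) F1)
             (is_derive_comp sin _ _ _ _ (is_derive_sin _) F2)).
  - unfold Re, Im, scal; simpl; unfold mult; simpl; ring.
Qed.

Lemma is_cderive_moebius (a b c d : C) (h : R -> C) (t : R) (l : C) :
  is_cderive h t l -> c * h t + d <> 0 ->
  is_cderive (fun s => (a * h s + b) / (c * h s + d)) t ((a * d - b * c) * l / (c * h t + d) ^ 2).
Proof.
  intros Hh Hn. eapply is_cderive_eq.
  - apply is_cderive_div.
    + apply is_cderive_plus; [apply is_cderive_scal, Hh | apply is_cderive_const].
    + apply is_cderive_plus; [apply is_cderive_scal, Hh | apply is_cderive_const].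
    + exact Hn.
  - cbv beta. field. exact Hn.
Qed.

(** * Directional derivatives along lines *)

Close Scope C_scope.

Definition line (p a : R * R) (t : R) : R * R := (fst p + t * fst a, snd p + t * snd a).

Lemma line_0 (p a : R * R) : line p a 0 = p.
Proof. destruct p; unfold line; simpl; f_equal; ring. Qed.

Lemma filterdiff_line (p a : R * R) :
  @filterdiff R_AbsRing (AbsRing_NormedModule R_AbsRing)
    (prod_NormedModule R_AbsRing R_NormedModule R_NormedModule)
    (line p a) (locally 0) (fun t => scal t a).
Proof.
  apply filterdiff_ext with
    (f := fun t : R =>
            plus (p : prod_NormedModule R_AbsRing R_NormedModule R_NormedModule) (scal t a)).
  - intros t; destruct p, a; reflexivity.
  - eapply filterdiff_ext_lin.
    + apply filterdiff_plus_fct; [apply filterdiff_const|].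
      apply filterdiff_linear, (is_linear_scal_l (K := R_AbsRing) a).
    + intros t; apply plus_zero_l.
Qed.

Lemma dir_deriv_exists (f : R * R -> R) (p a : R * R) :
  ex_filterdiff f (locally p) -> exists l, dir_deriv f p a l.
Proof.
  intros [lf Hf].
  assert (Hfl : filterdiff (fun t => f (line p a t)) (locally 0) (fun t => lf (scal t a))).
  { apply (filterdiff_comp' (line p a) f 0 _ lf (filterdiff_line p a)).
    now rewrite line_0. }
  destruct (proj2 (ex_derive_filterdiff (fun t => f (line p a t)) 0) (ex_intro _ _ Hfl)) as [l Hl].
  now exists l.
Qed.

Lemma locally_line_open (U : R * R -> Prop) (p a : R * R) :
  open U -> U p -> locally 0 (fun t => U (line p a t)).
Proof.
  intros HU Hp.
  assert (Hc : continuous (line p a) 0).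
  { apply (filterdiff_continuous (K := R_AbsRing) (U := AbsRing_NormedModule R_AbsRing)
      (V := prod_NormedModule R_AbsRing R_NormedModule R_NormedModule)).
    eexists; apply filterdiff_line. }
  apply Hc. rewrite line_0. now apply HU.
Qed.

Open Scope C_scope.

Lemma cderiv_along_line (X : R * R -> R * R) (f : R * R -> C) (p : R * R) (l : C) :
  cderiv_along X f p l <-> is_cderive (fun t => f (line p (X p) t)) 0%R l.
Proof. reflexivity. Qed.

Lemma is_cderive_zc_line (p a : R * R) (t : R) :
  is_cderive (fun s => zc (line p a s)) t (zc a).
Proof.
  split; unfold zc, line, Re, Im; simpl; auto_derive; trivial; field.
Qed.

Lemma is_cderive_moebius_line (a b c d : C) (p v : R * R) :
  c * zc p + d <> 0 ->
  is_cderive (fun t => (a * zc (line p v t) + b) / (c * zc (line p v t) + d)) 0%R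
    ((a * d - b * c) * zc v / (c * zc p + d) ^ 2).
Proof.
  pose proof (is_cderive_moebius a b c d _ _ _ (is_cderive_zc_line p v 0%R)) as H.
  cbv beta in H. rewrite line_0 in H. exact H.
Qed.

Lemma zc_gckv (mu0 mu1 mu2 : C) (p : R * R) :
  zc (gckv mu0 mu1 mu2 p) = gckv_coef mu0 mu1 mu2 (zc p).
Proof.
  unfold gckv. destruct (gckv_coef mu0 mu1 mu2 (zc p)) as [x y].
  unfold zc, Re, Im; simpl. f_equal; field.
Qed.

Lemma gckv_coef_scale_i (mu0 mu1 mu2 z : C) :
  gckv_coef (Ci * mu0) (Ci * mu1) (Ci * mu2) z = Ci * gckv_coef mu0 mu1 mu2 z.
Proof. unfold gckv_coef. ring. Qed.

Lemma zc_shift (p : R * R) (t : R) : zc ((fst p + t)%R, snd p) = zc p + t * RtoC (/ 2).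
Proof. unfold zc, Cplus, Cmult, RtoC; simpl. f_equal; field. Qed.

(* Complex differentiability of [W] at [z], in the only form used: the chain rule along
   real curves through [z]. *)
Definition is_holo_derive (W : C -> C) (z w' : C) : Prop :=
  forall (h : R -> C) (l : C), is_cderive h 0%R l -> h 0%R = z ->
    is_cderive (fun s => W (h s)) 0%R (w' * l).

Lemma dir_deriv_through_coordinate (U : R * R -> Prop) (om zeta : R * R -> C) (W : C -> C)
    (p a : R * R) (w' v : C) (d1 d2 : R) :
  open U -> U p -> (forall q, U q -> om q = W (zeta q)) ->
  is_holo_derive W (zeta p) w' -> w' <> 0 ->
  is_cderive (fun t => om (line p a t)) 0%R (w' * v) ->
  dir_deriv (fun q => (2 * Re (zeta q))%R) p a d1 ->
  dir_deriv (fun q => (2 * Im (zeta q))%R) p a d2 ->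
  d1 = (2 * Re v)%R /\ d2 = (2 * Im v)%R.
Proof.
  intros HU Hp Hom HW Hw Hv H1 H2.
  set (h := fun t => zeta (line p a t)).
  assert (Hh : is_cderive h 0%R ((d1 / 2)%R, (d2 / 2)%R)).
  { split; simpl.
    - eapply is_derive_ext;
        [|eapply is_derive_eq; [exact (is_derive_scal _ _ (/ 2)%R _ H1) | unfold Rdiv; ring]].
      intros t. unfold h, line; simpl. field.
    - eapply is_derive_ext;
        [|eapply is_derive_eq; [exact (is_derive_scal _ _ (/ 2)%R _ H2) | unfold Rdiv; ring]].
      intros t. unfold h, line; simpl. field. }
  assert (Hh0 : h 0%R = zeta p) by (unfold h; now rewrite line_0).
  assert (Hchain : is_cderive (fun t => om (line p a t)) 0%R (w' * ((d1 / 2)%R, (d2 / 2)%R))).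
  { eapply is_cderive_ext_loc; [|exact (HW h _ Hh Hh0)].
    eapply filter_imp; [|exact (locally_line_open U p a HU Hp)].
    intros t Ht. symmetry. now apply Hom. }
  set (dv := ((d1 / 2)%R, (d2 / 2)%R) : C) in Hchain.
  assert (E : dv = v).
  { transitivity (/ w' * (w' * dv)); [field; exact Hw|].
    rewrite (is_cderive_unique _ _ _ _ Hchain Hv). field. exact Hw. }
  rewrite <- E. unfold dv, Re, Im; simpl. split; field.
Qed.

(** * Quadratic identities *)

Lemma real_quartic_coeffs_zero (c0 c1 c2 c3 c4 : R) :
  (forall t : R, c0 + c1 * t + c2 * t ^ 2 + c3 * t ^ 3 + c4 * t ^ 4 = 0)%R ->
  (c0 = 0 /\ c1 = 0 /\ c2 = 0 /\ c3 = 0 /\ c4 = 0)%R.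
Proof.
  intros H.
  pose proof (H 0%R) as H0. pose proof (H 1%R) as H1. pose proof (H 2%R) as H2.
  pose proof (H 3%R) as H3. pose proof (H 4%R) as H4.
  ring_simplify in H0. ring_simplify in H1. ring_simplify in H2.
  ring_simplify in H3. ring_simplify in H4.
  repeat split; lra.
Qed.

Lemma complex_quartic_coeffs_zero (c0 c1 c2 c3 c4 : C) :
  (forall t : R, c0 + c1 * t + c2 * t ^ 2 + c3 * t ^ 3 + c4 * t ^ 4 = 0) ->
  c0 = 0 /\ c1 = 0 /\ c2 = 0 /\ c3 = 0 /\ c4 = 0.
Proof.
  destruct c0 as [a0 b0], c1 as [a1 b1], c2 as [a2 b2], c3 as [a3 b3], c4 as [a4 b4].
  intros H.
  destruct (real_quartic_coeffs_zero a0 a1 a2 a3 a4) as (-> & -> & -> & -> & ->).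
  { intros t. specialize (H t). apply (f_equal fst) in H. simpl in H. rewrite <- H. ring. }
  destruct (real_quartic_coeffs_zero b0 b1 b2 b3 b4) as (-> & -> & -> & -> & ->).
  { intros t. specialize (H t). apply (f_equal snd) in H. simpl in H. rewrite <- H. ring. }
  repeat split.
Qed.

Lemma quadratic_product_coeffs_zero (r0 r1 r2 e0 e1 e2 : C) : e0 <> 0 ->
  (forall t : R, (r0 + r1 * t + r2 * t ^ 2) * (e0 + e1 * t + e2 * t ^ 2) = 0) ->
  r0 = 0 /\ r1 = 0 /\ r2 = 0.
Proof.
  intros He H.
  destruct (complex_quartic_coeffs_zero (r0 * e0) (r0 * e1 + r1 * e0)
              (r0 * e2 + r1 * e1 + r2 * e0) (r1 * e2 + r2 * e1) (r2 * e2))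
    as (A0 & A1 & A2 & _).
  { intros t. rewrite <- (H t). ring. }
  assert (Z0 : r0 = 0) by (apply (Cmult_eq_0_r e0); [exact He | rewrite <- A0; ring]).
  subst r0.
  assert (Z1 : r1 = 0) by (apply (Cmult_eq_0_r e0); [exact He | rewrite <- A1; ring]).
  subst r1.
  assert (Z2 : r2 = 0) by (apply (Cmult_eq_0_r e0); [exact He | rewrite <- A2; ring]).
  now subst r2.
Qed.

Lemma binary_quadratic_form_zero (q2 q1 q0 n1 n2 v1 v2 : C) :
  n1 * v2 - n2 * v1 <> 0 ->
  q2 * n1 ^ 2 + q1 * n1 * n2 + q0 * n2 ^ 2 = 0 ->
  RtoC 2 * q2 * n1 * v1 + q1 * (n1 * v2 + n2 * v1) + RtoC 2 * q0 * n2 * v2 = 0 ->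
  q2 * v1 ^ 2 + q1 * v1 * v2 + q0 * v2 ^ 2 = 0 ->
  q2 = 0 /\ q1 = 0 /\ q0 = 0.
Proof.
  intros Hdet E0 E1 E2.
  (* Evaluate the form at (1, 0), (0, 1) and (1, 1), written in the basis (n, v). *)
  assert (Hdet2 : (n1 * v2 - n2 * v1) ^ 2 <> 0) by now apply Cpow_nz.
  assert (Q2 : q2 = 0).
  { apply (Cmult_eq_0_r _ _ Hdet2).
    transitivity (v2 ^ 2 * (q2 * n1 ^ 2 + q1 * n1 * n2 + q0 * n2 ^ 2)
      - v2 * n2 * (RtoC 2 * q2 * n1 * v1 + q1 * (n1 * v2 + n2 * v1) + RtoC 2 * q0 * n2 * v2)
      + n2 ^ 2 * (q2 * v1 ^ 2 + q1 * v1 * v2 + q0 * v2 ^ 2)); [ring|].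
    rewrite E0, E1, E2. ring. }
  assert (Q0 : q0 = 0).
  { apply (Cmult_eq_0_r _ _ Hdet2).
    transitivity (v1 ^ 2 * (q2 * n1 ^ 2 + q1 * n1 * n2 + q0 * n2 ^ 2)
      - v1 * n1 * (RtoC 2 * q2 * n1 * v1 + q1 * (n1 * v2 + n2 * v1) + RtoC 2 * q0 * n2 * v2)
      + n1 ^ 2 * (q2 * v1 ^ 2 + q1 * v1 * v2 + q0 * v2 ^ 2)); [ring|].
    rewrite E0, E1, E2. ring. }
  assert (Q1 : q2 + q1 + q0 = 0).
  { apply (Cmult_eq_0_r _ _ Hdet2).
    transitivity ((v2 - v1) ^ 2 * (q2 * n1 ^ 2 + q1 * n1 * n2 + q0 * n2 ^ 2)
      + (v2 - v1) * (n1 - n2)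
        * (RtoC 2 * q2 * n1 * v1 + q1 * (n1 * v2 + n2 * v1) + RtoC 2 * q0 * n2 * v2)
      + (n1 - n2) ^ 2 * (q2 * v1 ^ 2 + q1 * v1 * v2 + q0 * v2 ^ 2)); [ring|].
    rewrite E0, E1, E2. ring. }
  rewrite Q2, Q0 in Q1 |- *. repeat split.
  rewrite <- Q1. ring.
Qed.

Lemma quadratic_zero_on_moebius_path (q2 q1 q0 n1 n2 v1 v2 c d : C) :
  n1 * v2 - n2 * v1 <> 0 -> n2 <> 0 -> c * n1 + d * n2 <> 0 ->
  (forall t : R, n2 + t * v2 <> 0 -> c * (n1 + t * v1) + d * (n2 + t * v2) <> 0 ->
     q2 * ((n1 + t * v1) / (n2 + t * v2)) ^ 2 + q1 * ((n1 + t * v1) / (n2 + t * v2)) + q0 = 0) ->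
  q2 = 0 /\ q1 = 0 /\ q0 = 0.
Proof.
  intros Hdet Hn2 Hl H.
  destruct (quadratic_product_coeffs_zero
    (q2 * n1 ^ 2 + q1 * n1 * n2 + q0 * n2 ^ 2)
    (RtoC 2 * q2 * n1 * v1 + q1 * (n1 * v2 + n2 * v1) + RtoC 2 * q0 * n2 * v2)
    (q2 * v1 ^ 2 + q1 * v1 * v2 + q0 * v2 ^ 2)
    (n2 * (c * n1 + d * n2)) (n2 * (c * v1 + d * v2) + v2 * (c * n1 + d * n2))
    (v2 * (c * v1 + d * v2))) as (E0 & E1 & E2).
  - now apply Cmult_neq_0.
  - intros t.
    set (N := n1 + t * v1). set (P := n2 + t * v2). set (L := c * N + d * P).
    transitivity ((q2 * N ^ 2 + q1 * N * P + q0 * P ^ 2) * (P * L)); [unfold L, N, P; ring|].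
    destruct (Ceq_dec P 0) as [Z|HP]; [rewrite Z; ring|].
    destruct (Ceq_dec L 0) as [Z|HL]; [rewrite Z; ring|].
    transitivity (P ^ 3 * L * (q2 * (N / P) ^ 2 + q1 * (N / P) + q0)); [field; exact HP|].
    unfold N, P. rewrite H by assumption. ring.
  - exact (binary_quadratic_form_zero q2 q1 q0 n1 n2 v1 v2 Hdet E0 E1 E2).
Qed.

Lemma moebius_canonical_form (a b c d c0 m : C) :
  a * d - b * c <> 0 ->
  a ^ 2 + c0 * c ^ 2 = a * d - b * c ->
  a * b + c0 * c * d = 0 ->
  b ^ 2 + c0 * d ^ 2 = (a * d - b * c) * m ->
  a = d /\ b = - (m * c) /\ a ^ 2 + m * c ^ 2 = a * d - b * c.
Proof.
  intros Hdet E2 E1 E0.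
  assert (Had : a = d).
  { apply Cminus_eq_0, (Cmult_eq_0_r (a * d - b * c) _ Hdet).
    transitivity (- c * (a * b + c0 * c * d) + d * (a ^ 2 + c0 * c ^ 2 - (a * d - b * c)));
      [ring|].
    rewrite E1, E2. ring. }
  subst d.
  destruct (Ceq_dec c 0) as [Hc|Hc].
  - subst c.
    assert (Ha : a <> 0) by (contradict Hdet; rewrite Hdet; ring).
    assert (Hb : b = 0) by (apply (Cmult_eq_0_r a _ Ha); rewrite <- E1; ring).
    subst b. repeat split; ring.
  - assert (Hb : b = - (c0 * c)).
    { apply Cminus_eq_0, (Cmult_eq_0_r c _ Hc).
      transitivity (a ^ 2 + c0 * c ^ 2 - (a * a - b * c)); [ring|].
      rewrite E2. ring. }
    assert (Hm : c0 = m).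
    { apply Cminus_eq_0, (Cmult_eq_0_r (a * a - b * c) _ Hdet).
      transitivity (c0 * ((a * a - b * c) - (a ^ 2 + c0 * c ^ 2))
                    - ((a * a - b * c) * m - (b ^ 2 + c0 * a ^ 2)) + (c0 * c0 * c ^ 2 - b ^ 2));
        [ring|].
      rewrite E2, E0, Hb. ring. }
    subst c0. repeat split; assumption.
Qed.

(** * Hermitian forms *)

Definition hermitian_form (A B B' D w : C) : C := A * w * Cconj w + B * w + B' * Cconj w + D.

Definition Omega_hom (u0 u1 u2 u3 : R) (x y : C) : C :=
  (RtoC u0 - RtoC u1) * x * Cconj x + (RtoC u2 + Ci * RtoC u3) * x * Cconj y
  + (RtoC u2 - Ci * RtoC u3) * Cconj x * y + (RtoC u0 + RtoC u1) * y * Cconj y.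

Definition uprime_form (a b g d : C) (u0 u1 u2 u3 : R) : C -> C :=
  let u' := uprime a b g d u0 u1 u2 u3 in
  hermitian_form (u' 0%nat - u' 1%nat) (u' 2%nat + Ci * u' 3%nat)
                 (u' 2%nat - Ci * u' 3%nat) (u' 0%nat + u' 1%nat).

(* [Lambda] is the action on Hermitian forms of the inverse Moebius map
   [z = (del w - bet) / (- gam w + alp)], written in homogeneous coordinates. *)
Lemma uprime_form_eq (a b g d : C) (u0 u1 u2 u3 : R) (w : C) :
  uprime_form a b g d u0 u1 u2 u3 w = Omega_hom u0 u1 u2 u3 (d * w - b) (- g * w + a).
Proof.
  destruct a, b, g, d, w. cbv -[Rmult Rplus Rminus Ropp Rinv].
  apply injective_projections; simpl; field.
Qed.

Lemma Omega_moebius (a b g d z : C) (u0 u1 u2 u3 : R) :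
  a * d - b * g = 1 -> g * z + d <> 0 ->
  Omega u0 u1 u2 u3 z =
    (g * z + d) * Cconj (g * z + d) * uprime_form a b g d u0 u1 u2 u3 ((a * z + b) / (g * z + d)).
Proof.
  intros Hdet Hn. rewrite uprime_form_eq.
  set (P := g * z + d) in *.
  assert (E1 : d * ((a * z + b) / P) - b = z / P).
  { unfold P. field_simplify_eq; [|exact Hn].
    transitivity (z * (a * d - b * g)); [ring|]. rewrite Hdet. ring. }
  assert (E2 : - g * ((a * z + b) / P) + a = 1 / P).
  { unfold P. field_simplify_eq; [|exact Hn].
    transitivity (a * d - b * g); [ring|]. rewrite Hdet. ring. }
  rewrite E1, E2. unfold Omega_hom, Omega.
  rewrite !Cdiv_conj by exact Hn.
  assert (Hc : Cconj P <> 0) by now apply Cconj_neq_0.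
  replace (Cconj 1) with (RtoC 1) by (apply injective_projections; simpl; ring).
  field. split; assumption.
Qed.

Lemma metric_ratio (a : R * R) (v w' P H G : C) :
  w' <> 0 -> P <> 0 -> H <> 0 -> G * G * (w' * Cconj w') = 1 -> w' * v = zc a / P ^ 2 ->
  RtoC (fst a ^ 2 + snd a ^ 2)%R / (P * Cconj P * H) ^ 2
  = RtoC ((2 * Re v) ^ 2 + (2 * Im v) ^ 2)%R / (H * G) ^ 2.
Proof.
  intros Hw HP HH HG Hv.
  assert (HG0 : G <> 0) by (intros Z; rewrite Z in HG; apply C1_nz; rewrite <- HG; ring).
  assert (HPc : Cconj P <> 0) by now apply Cconj_neq_0.
  assert (Ea : RtoC (fst a ^ 2 + snd a ^ 2)%R = RtoC 4 * (zc a * Cconj (zc a))).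
  { rewrite <- norm2_conj. unfold zc, Re, Im, RtoC, Cmult; simpl. f_equal; field. }
  assert (Ev : RtoC ((2 * Re v) ^ 2 + (2 * Im v) ^ 2)%R = RtoC 4 * (v * Cconj v)).
  { rewrite <- norm2_conj. unfold RtoC, Cmult; simpl. f_equal; ring. }
  assert (Ez : zc a = w' * v * P ^ 2) by (rewrite Hv; field; exact HP).
  rewrite Ea, Ev, Ez, !Cmult_conj, Cpow_conj.
  transitivity (RtoC 4 * (v * Cconj v) * (G * G * (w' * Cconj w')) / (H * G) ^ 2).
  - field. repeat split; assumption.
  - rewrite HG. field. split; assumption.
Qed.

Definition scaled_hermitian_monomials (fp fm f2 f3 : R) (w w' : C) : Prop :=
  exists G : C, RtoC fp = w * Cconj w * G /\ RtoC fm = G /\ RtoC f2 = (w + Cconj w) * G /\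
    RtoC f3 = Ci * (w - Cconj w) * G /\ G * G * (w' * Cconj w') = 1.

Lemma scaled_hermitian_monomials_rational (z1 z2 : R) : (z1, z2) <> RtoC 0 ->
  scaled_hermitian_monomials (1 / 2) (1 / 2 * ((2 * z1) ^ 2 + (2 * z2) ^ 2))
    (- (2 * z1)) (- (2 * z2)) (- / (RtoC 2 * (z1, z2))) (/ (RtoC 2 * (z1, z2) ^ 2)).
Proof.
  intros Hz.
  assert (H1 : (z1 ^ 2 + z2 ^ 2 <> 0)%R).
  { contradict Hz. apply injective_projections; simpl; nra. }
  exists (RtoC (2 * (z1 ^ 2 + z2 ^ 2))).
  unfold Cconj, Cdiv, Cmult, Cplus, Cminus, Copp, Cinv, RtoC, Cpow, Ci; simpl.
  repeat split; apply injective_projections; simpl; field.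
  all: repeat split; intros Z; apply H1; nra.
Qed.

(* [e = (A, B)] stands for [exp (- Y + i X)] and [rho] for [exp Y]; writing [exp (- Y)]
   as [(A^2 + B^2) rho] and [cos X, sin X] as [A rho, B rho] turns the hyperbolic and
   trigonometric expressions of [f_+, f_-, f_2, f_3] into rational functions. *)
Lemma scaled_hermitian_monomials_exp (A B rho k1 k2 : R) :
  ((1 - A) ^ 2 + B ^ 2 <> 0)%R -> (k1 ^ 2 + k2 ^ 2 <> 0)%R -> rho <> 0%R ->
  (rho ^ 2 * (A ^ 2 + B ^ 2) = 1)%R ->
  let e : C := (A, B) in
  let k : C := (k1, k2) in
  scaled_hermitian_monomials
    (/ 4 * ((rho + (A ^ 2 + B ^ 2) * rho) / 2 + A * rho))
    (/ (k1 ^ 2 + k2 ^ 2) * ((rho + (A ^ 2 + B ^ 2) * rho) / 2 - A * rho))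
    ((- k2 * ((rho - (A ^ 2 + B ^ 2) * rho) / 2) - k1 * (B * rho)) / (k1 ^ 2 + k2 ^ 2))
    (- (k1 * ((rho - (A ^ 2 + B ^ 2) * rho) / 2) - k2 * (B * rho)) / (k1 ^ 2 + k2 ^ 2))
    (Ci * k / RtoC 2 * ((RtoC 1 + e) / (RtoC 1 - e)))
    (- (RtoC 2 * k ^ 2 * e) / (RtoC 1 - e) ^ 2).
Proof.
  intros H1 H2 H3 Hunit e k.
  exists (RtoC (rho * ((1 - A) ^ 2 + B ^ 2) / (2 * (k1 ^ 2 + k2 ^ 2)))).
  assert (H1' : ((1 - A) * ((1 - A) * 1) + B * (B * 1) <> 0)%R) by (contradict H1; nra).
  assert (H1'' : ((1 - A) * ((1 - A) * 1) + (- B) * ((- B) * 1) <> 0)%R) by (contradict H1; nra).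
  split; [|split; [|split; [|split]]].
  5: transitivity (RtoC (rho ^ 2 * (A ^ 2 + B ^ 2))); [|now rewrite Hunit].
  all: unfold e, k, Cconj, Cdiv, Cmult, Cplus, Cminus, Copp, Cinv, RtoC, Cpow, Ci; simpl.
  all: apply injective_projections; simpl; field; repeat split; auto.
  all: intros Z; first [apply H1; nra | apply H2; nra].
Qed.

(** * The coordinate zeta *)

Definition zeta_rate (Q theta : R) : C := RtoC (sqrt Q) * cexp (0%R, (- theta)%R).

Definition domega_of_zeta (Q theta : R) (zeta : C) : C :=
  if Rle_dec Q 0 then / (RtoC 2 * zeta ^ 2)
  else
    let k := zeta_rate Q theta in
    let e := cexp (RtoC 2 * Ci * k * zeta) in
    - (RtoC 2 * k ^ 2 * e) / (RtoC 1 - e) ^ 2.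

Lemma zeta_rate_eq (Q theta : R) :
  zeta_rate Q theta = (sqrt Q * cos theta, - (sqrt Q * sin theta))%R.
Proof.
  unfold zeta_rate, cexp, RtoC, Cmult; simpl. rewrite exp_0, cos_neg, sin_neg.
  apply injective_projections; simpl; ring.
Qed.

Lemma zeta_rate_sq (Q theta : R) : (0 <= Q)%R ->
  zeta_rate Q theta ^ 2 = RtoC Q * cexp (0%R, (- 2 * theta)%R).
Proof.
  intros HQ. rewrite zeta_rate_eq. unfold cexp, RtoC, Cmult, Cpow; simpl.
  replace (- 2 * theta)%R with (- (2 * theta))%R by ring.
  rewrite exp_0, cos_neg, sin_neg, cos_2a, sin_2a.
  assert (Hs : (sqrt Q * sqrt Q = Q)%R) by now apply sqrt_sqrt.
  apply injective_projections; simpl.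
  - transitivity ((sqrt Q * sqrt Q) * (cos theta * cos theta - sin theta * sin theta))%R;
      [ring | rewrite Hs; ring].
  - transitivity (- ((sqrt Q * sqrt Q) * (2 * sin theta * cos theta)))%R;
      [ring | rewrite Hs; ring].
Qed.

Lemma zeta_rate_neq_0 (Q theta : R) : (0 < Q)%R -> zeta_rate Q theta <> 0.
Proof.
  intros HQ. rewrite zeta_rate_eq. intros Z. injection Z as Z1 Z2.
  pose proof (sqrt_lt_R0 Q HQ) as Hs. pose proof (sin2_cos2 theta) as Hsc. unfold Rsqr in Hsc.
  apply Rmult_integral in Z1 as [Z1|Z1]; [lra|].
  assert (sin theta = 0)%R by nra. nra.
Qed.

Lemma zeta_exp_eq (Q theta : R) (z : C) :
  cexp (RtoC 2 * Ci * zeta_rate Q theta * z)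
  = cexp ((- (sqrt Q * h2 theta (2 * Re z) (2 * Im z)))%R,
          (sqrt Q * h1 theta (2 * Re z) (2 * Im z))%R).
Proof.
  f_equal. rewrite zeta_rate_eq. unfold h1, h2, Re, Im, RtoC, Ci, Cmult; simpl.
  apply injective_projections; simpl; ring.
Qed.

Lemma is_holo_derive_omega_of_zeta (Q theta : R) (z : C) :
  omega_of_zeta_defined Q theta z ->
  is_holo_derive (omega_of_zeta Q theta) z (domega_of_zeta Q theta z).
Proof.
  unfold omega_of_zeta_defined, omega_of_zeta, domega_of_zeta, is_holo_derive.
  fold (zeta_rate Q theta). intros Hdef h l Hh <-.
  destruct (Rle_dec Q 0) as [HQ|HQ].
  - eapply is_cderive_eq.
    + apply is_cderive_opp, is_cderive_inv; [apply is_cderive_scal, Hh|].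
      contradict Hdef. transitivity (/ RtoC 2 * (RtoC 2 * h 0%R)); [field|]. rewrite Hdef. ring.
    + cbv beta. field. exact Hdef.
  - set (k := zeta_rate Q theta) in *.
    set (e := fun s => cexp (RtoC 2 * Ci * k * h s)).
    assert (He : is_cderive e 0%R (e 0%R * (RtoC 2 * Ci * k * l))).
    { apply is_cderive_cexp, is_cderive_scal, Hh. }
    eapply is_cderive_eq.
    + apply is_cderive_scal, is_cderive_div.
      * apply is_cderive_plus; [apply is_cderive_const | exact He].
      * apply is_cderive_minus; [apply is_cderive_const | exact He].
      * exact Hdef.
    + cbv beta. fold (e 0%R).
      transitivity ((Ci * Ci) * (RtoC 2 * k ^ 2 * e 0%R * l) / (RtoC 1 - e 0%R) ^ 2);
        [field; exact Hdef|].
      rewrite Ci_sq. field. exact Hdef.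
Qed.

Lemma omega_of_zeta_riccati (Q theta : R) (z m0 : C) : (0 <= Q)%R ->
  RtoC 4 * m0 = RtoC Q * cexp (0%R, (- 2 * theta)%R) ->
  omega_of_zeta_defined Q theta z ->
  RtoC 2 * (m0 + omega_of_zeta Q theta z ^ 2) = domega_of_zeta Q theta z
  /\ domega_of_zeta Q theta z <> 0.
Proof.
  intros HQ Hm0. rewrite <- zeta_rate_sq in Hm0 by exact HQ.
  unfold omega_of_zeta_defined, omega_of_zeta, domega_of_zeta.
  fold (zeta_rate Q theta). intros Hdef.
  destruct (Rle_dec Q 0) as [HQ0|HQ0].
  - assert (Hk : zeta_rate Q theta = 0).
    { replace Q with 0%R by lra. rewrite zeta_rate_eq, sqrt_0.
      apply injective_projections; simpl; ring. }
    assert (Hm : m0 = 0).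
    { transitivity (RtoC 4 * m0 / RtoC 4); [field|]. rewrite Hm0, Hk. field. }
    split.
    + rewrite Hm. field. exact Hdef.
    + assert (H2 : RtoC 2 * z ^ 2 <> 0).
      { apply Cmult_neq_0; [|now apply Cpow_nz]. intros Z; injection Z; lra. }
      intros Z. apply C1_nz. rewrite <- (Cinv_r _ H2), Z. ring.
  - assert (HQpos : (0 < Q)%R) by lra.
    set (k := zeta_rate Q theta) in *.
    set (e := cexp (RtoC 2 * Ci * k * z)) in *.
    assert (Hm : m0 = k ^ 2 / RtoC 4) by (rewrite <- Hm0; field).
    split.
    + rewrite Hm.
      transitivity (RtoC 2 * (k ^ 2 / RtoC 4
                      + (Ci * Ci) * (k / RtoC 2 * ((RtoC 1 + e) / (RtoC 1 - e))) ^ 2));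
        [field; exact Hdef|].
      rewrite Ci_sq. field. exact Hdef.
    + assert (Hnum : RtoC 2 * k ^ 2 * e <> 0).
      { apply Cmult_neq_0; [apply Cmult_neq_0|apply cexp_neq_0].
        - intros Z; injection Z; lra.
        - now apply Cpow_nz, zeta_rate_neq_0. }
      intros Z. apply Hnum.
      transitivity (- (- (RtoC 2 * k ^ 2 * e) / (RtoC 1 - e) ^ 2) * (RtoC 1 - e) ^ 2);
        [field; exact Hdef|].
      rewrite Z. ring.
Qed.

Lemma f_functions_scaled_monomials (Q theta : R) (z : C) :
  omega_of_zeta_defined Q theta z ->
  let x1 := (2 * Re z)%R in
  let x2 := (2 * Im z)%R in
  scaled_hermitian_monomials (f_plus Q theta x1 x2) (f_minus Q theta x1 x2)
    (f_2 Q theta x1 x2) (f_3 Q theta x1 x2) (omega_of_zeta Q theta z) (domega_of_zeta Q theta z).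
Proof.
  unfold omega_of_zeta_defined, omega_of_zeta, domega_of_zeta, f_plus, f_minus, f_2, f_3.
  fold (zeta_rate Q theta). intros Hdef.
  destruct (Rle_dec Q 0) as [HQ|HQ].
  - destruct z as [z1 z2]. exact (scaled_hermitian_monomials_rational z1 z2 Hdef).
  - rewrite zeta_exp_eq in Hdef |- *.
    set (X := (sqrt Q * h1 theta (2 * Re z) (2 * Im z))%R) in *.
    set (Y := (sqrt Q * h2 theta (2 * Re z) (2 * Im z))%R) in *.
    set (A := (exp (- Y) * cos X)%R). set (B := (exp (- Y) * sin X)%R). set (rho := exp Y).
    assert (Ee : cexp ((- Y)%R, X) = (A, B)) by reflexivity.
    rewrite Ee in Hdef |- *. rewrite zeta_rate_eq.
    set (k1 := (sqrt Q * cos theta)%R). set (k2 := (- (sqrt Q * sin theta))%R).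
    assert (Hs : (sqrt Q * sqrt Q = Q)%R) by (apply sqrt_sqrt; lra).
    assert (HsQ : (0 < sqrt Q)%R) by (apply sqrt_lt_R0; lra).
    assert (HQk : (k1 ^ 2 + k2 ^ 2 = Q)%R).
    { unfold k1, k2. pose proof (sin2_cos2 theta) as Hsc. unfold Rsqr in Hsc.
      transitivity ((sqrt Q * sqrt Q) * (sin theta * sin theta + cos theta * cos theta))%R;
        [ring | rewrite Hs, Hsc; ring]. }
    assert (Hrho : (exp (- Y) * rho = 1)%R).
    { unfold rho. rewrite <- exp_plus. replace (- Y + Y)%R with 0%R by ring. apply exp_0. }
    assert (Ecos : cos X = (A * rho)%R).
    { unfold A. transitivity (cos X * (exp (- Y) * rho))%R; [rewrite Hrho|]; ring. }
    assert (Esin : sin X = (B * rho)%R).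
    { unfold B. transitivity (sin X * (exp (- Y) * rho))%R; [rewrite Hrho|]; ring. }
    assert (Eem : exp (- Y) = ((A ^ 2 + B ^ 2) * rho)%R).
    { unfold A, B. pose proof (sin2_cos2 X) as Hsc. unfold Rsqr in Hsc.
      transitivity (exp (- Y) * (exp (- Y) * rho) * (sin X * sin X + cos X * cos X))%R;
        [rewrite Hrho, Hsc|]; ring. }
    assert (Efp : (/ 4 * (cosh Y + cos X) = / 4 * ((rho + (A ^ 2 + B ^ 2) * rho) / 2 + A * rho))%R).
    { unfold cosh. now rewrite Eem, Ecos. }
    assert (Efm : (/ Q * (cosh Y - cos X)
                   = / (k1 ^ 2 + k2 ^ 2) * ((rho + (A ^ 2 + B ^ 2) * rho) / 2 - A * rho))%R).
    { unfold cosh. now rewrite Eem, Ecos, HQk. }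
    assert (Ef2 : (/ sqrt Q * (sin theta * sinh Y - cos theta * sin X)
                   = (- k2 * ((rho - (A ^ 2 + B ^ 2) * rho) / 2) - k1 * (B * rho))
                     / (k1 ^ 2 + k2 ^ 2))%R).
    { unfold sinh. rewrite Eem, Esin, HQk. fold rho. unfold k1, k2.
      set (sQ := sqrt Q) in *. rewrite <- Hs. field. lra. }
    assert (Ef3 : (- / sqrt Q * (cos theta * sinh Y + sin theta * sin X)
                   = - (k1 * ((rho - (A ^ 2 + B ^ 2) * rho) / 2) - k2 * (B * rho))
                     / (k1 ^ 2 + k2 ^ 2))%R).
    { unfold sinh. rewrite Eem, Esin, HQk. fold rho. unfold k1, k2.
      set (sQ := sqrt Q) in *. rewrite <- Hs. field. lra. }
    rewrite Efp, Efm, Ef2, Ef3.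
    apply scaled_hermitian_monomials_exp.
    + contradict Hdef. clearbody A B. assert (A = 1%R) by nra. subst A.
      assert (B = 0%R) by nra. subst B. apply injective_projections; simpl; ring.
    + lra.
    + apply Rgt_not_eq, exp_pos.
    + rewrite <- Hrho, Eem. ring.
Qed.

(** * The canonical frame *)

Section CanonicalFrame.

Variables mu0 mu1 mu2 gam del : C.
Hypothesis Hnorm : / RtoC 2 * del ^ 2 * mu2 - gam * del * mu1 + gam ^ 2 * mu0 = RtoC 1.

Let alp := / RtoC 2 * (del * mu2 - gam * mu1).
Let bet := / RtoC 2 * del * mu1 - gam * mu0.
Let m0' := mu0p mu0 mu1 mu2.
Let om := fun p : R * R => (alp * zc p + bet) / (gam * zc p + del).

Lemma frame_det : alp * del - bet * gam = 1.
Proof. rewrite <- Hnorm. unfold alp, bet. field. Qed.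

Lemma gckv_coef_in_frame (z : C) : gam * z + del <> 0 ->
  gckv_coef mu0 mu1 mu2 z / (gam * z + del) ^ 2 = m0' + ((alp * z + bet) / (gam * z + del)) ^ 2.
Proof.
  intros Hn.
  assert (Hcoef : gckv_coef mu0 mu1 mu2 z = m0' * (gam * z + del) ^ 2 + (alp * z + bet) ^ 2).
  { rewrite <- (Cmult_1_l (gckv_coef _ _ _ z)), <- Hnorm.
    unfold m0', mu0p, alp, bet, gckv_coef. field. }
  rewrite Hcoef. field. exact Hn.
Qed.

Lemma gckv_moebius_frame (nu0 nu1 nu2 : C) (p : R * R) : gam * zc p + del <> 0 ->
  cderiv_along (gckv nu0 nu1 nu2) om p (gckv_coef nu0 nu1 nu2 (zc p) / (gam * zc p + del) ^ 2).
Proof.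
  intros Hn. eapply is_cderive_eq.
  - exact (is_cderive_moebius_line alp bet gam del p _ Hn).
  - rewrite frame_det, zc_gckv. field. exact Hn.
Qed.

Lemma gckv_canonical_in_frame (p : R * R) : gam * zc p + del <> 0 ->
  cderiv_along (gckv mu0 mu1 mu2) om p (m0' + om p ^ 2).
Proof.
  intros Hn. eapply is_cderive_eq.
  - exact (gckv_moebius_frame mu0 mu1 mu2 p Hn).
  - now apply gckv_coef_in_frame.
Qed.

Lemma gckv_perp_in_frame (p : R * R) : gam * zc p + del <> 0 ->
  cderiv_along (gckv (Ci * mu0) (Ci * mu1) (Ci * mu2)) om p (Ci * (m0' + om p ^ 2)).
Proof.
  intros Hn. eapply is_cderive_eq.
  - exact (gckv_moebius_frame _ _ _ p Hn).
  - transitivity (Ci * (gckv_coef mu0 mu1 mu2 (zc p) / (gam * zc p + del) ^ 2)).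
    + rewrite gckv_coef_scale_i. field. exact Hn.
    + now rewrite gckv_coef_in_frame.
Qed.

Section SecondCoordinate.

Variables a b c d c0 : C.
Let om' := fun p : R * R => (a * om p + b) / (c * om p + d).
Let dom := fun p : R * R => gam * zc p + del <> 0 /\ c * om p + d <> 0.

Hypothesis Hdet : a * d - b * c <> 0.
Hypothesis Hcanon : forall p : R * R, dom p ->
  cderiv_along (gckv mu0 mu1 mu2) om' p (c0 + om' p ^ 2).

Let q2 := a * d - b * c - c0 * c ^ 2 - a ^ 2.
Let q1 := - (RtoC 2 * (c0 * c * d + a * b)).
Let q0 := (a * d - b * c) * m0' - c0 * d ^ 2 - b ^ 2.

Lemma second_canonical_quadratic (p : R * R) : dom p ->
  q2 * om p ^ 2 + q1 * om p + q0 = 0.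
Proof.
  intros Hp. pose proof (Hcanon p Hp) as Hc0. destruct Hp as [Hn Hl].
  assert (Hchain : cderiv_along (gckv mu0 mu1 mu2) om' p
                     ((a * d - b * c) * (m0' + om p ^ 2) / (c * om p + d) ^ 2)).
  { apply cderiv_along_line.
    pose proof (is_cderive_moebius a b c d _ _ _
                  (proj1 (cderiv_along_line _ _ _ _) (gckv_canonical_in_frame p Hn))) as H.
    cbv beta in H. rewrite line_0 in H. exact (H Hl). }
  pose proof (is_cderive_unique _ _ _ _ (proj1 (cderiv_along_line _ _ _ _) Hchain)
                (proj1 (cderiv_along_line _ _ _ _) Hc0)) as E.
  unfold om' in E. set (w := om p) in *.
  transitivity ((c * w + d) ^ 2 * ((a * d - b * c) * (m0' + w ^ 2) / (c * w + d) ^ 2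
                                   - (c0 + ((a * w + b) / (c * w + d)) ^ 2))).
  - unfold q2, q1, q0. field. exact Hl.
  - rewrite E. ring.
Qed.

Lemma second_canonical_coeffs_zero (p0 : R * R) : dom p0 -> q2 = 0 /\ q1 = 0 /\ q0 = 0.
Proof.
  intros [Hn0 Hl0].
  (* Along the horizontal line through [p0], [om] is a non-constant Moebius function. *)
  set (n1 := alp * zc p0 + bet). set (n2 := gam * zc p0 + del).
  set (v1 := alp * RtoC (/ 2)). set (v2 := gam * RtoC (/ 2)).
  assert (Hshift : forall t : R, gam * zc ((fst p0 + t)%R, snd p0) + del = n2 + t * v2
                          /\ om ((fst p0 + t)%R, snd p0) = (n1 + t * v1) / (n2 + t * v2)).
  { intros t. unfold om. rewrite zc_shift. split; [|f_equal]; unfold n1, n2, v1, v2; ring. }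
  apply (quadratic_zero_on_moebius_path q2 q1 q0 n1 n2 v1 v2 c d).
  - assert (E : n1 * v2 - n2 * v1 = - RtoC (/ 2)).
    { transitivity (- (alp * del - bet * gam) * RtoC (/ 2)); [unfold n1, n2, v1, v2; ring|].
      rewrite frame_det. ring. }
    rewrite E. intros Z. injection Z. lra.
  - exact Hn0.
  - contradict Hl0. transitivity ((c * n1 + d * n2) / n2).
    + unfold om, n1, n2. field. exact Hn0.
    + rewrite Hl0. field. exact Hn0.
  - intros t Ht Hlt. destruct (Hshift t) as [Ez Ew].
    rewrite <- Ew. apply second_canonical_quadratic. split.
    + now rewrite Ez.
    + rewrite Ew. contradict Hlt.
      transitivity ((n2 + t * v2) * (c * ((n1 + t * v1) / (n2 + t * v2)) + d)).
      * field. exact Ht.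
      * rewrite Hlt. ring.
Qed.

Lemma second_canonical_coordinate :
  exists gam' del' : C,
    del' ^ 2 + m0' * gam' ^ 2 = 1 /\
    forall p : R * R, dom p ->
      gam' * om p + del' <> 0 /\
      om' p = (del' * om p - gam' * m0') / (gam' * om p + del').
Proof.
  destruct (classic (exists p0, dom p0)) as [[p0 Hp0]|Hnone].
  2: { exists 0, 1. split; [ring|]. intros p Hp. exfalso. eauto. }
  destruct (second_canonical_coeffs_zero p0 Hp0) as (Q2 & Q1 & Q0).
  destruct (moebius_canonical_form a b c d c0 m0' Hdet) as (Ead & Eb & Em).
  - transitivity (a * d - b * c - q2); [unfold q2; ring|]. rewrite Q2. ring.
  - transitivity (- q1 / RtoC 2); [unfold q1; field|]. rewrite Q1. field.
  - transitivity ((a * d - b * c) * m0' - q0); [unfold q0; ring|]. rewrite Q0. ring.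
  - destruct (C_sqrt_exists (a * d - b * c)) as [lam Hlam].
    assert (Hl : lam <> 0) by (contradict Hdet; rewrite <- Hlam, Hdet; ring).
    exists (c / lam), (a / lam). split.
    + transitivity ((a ^ 2 + m0' * c ^ 2) / (lam * lam)); [field; exact Hl|].
      rewrite Em, Hlam. field. exact Hdet.
    + intros p [_ Hlp]. split.
      * contradict Hlp. transitivity (lam * (c / lam * om p + a / lam)).
        -- rewrite Ead. field. exact Hl.
        -- rewrite Hlp. ring.
      * unfold om'. rewrite Eb, <- Ead. field. split; [exact Hl|].
        rewrite Ead. exact Hlp.
Qed.

End SecondCoordinate.

Lemma adapted_coordinates (U : R * R -> Prop) (zeta : R * R -> C) (W : C -> C)
    (p : R * R) (w' : C) :
  let v1 := fun q : R * R => (2 * Re (zeta q))%R in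
  let v2 := fun q : R * R => (2 * Im (zeta q))%R in
  open U -> U p -> gam * zc p + del <> 0 -> (forall q, U q -> om q = W (zeta q)) ->
  ex_filterdiff v1 (locally p) -> ex_filterdiff v2 (locally p) ->
  is_holo_derive W (zeta p) w' -> RtoC 2 * (m0' + W (zeta p) ^ 2) = w' -> w' <> 0 ->
  deriv_along (gckv mu0 mu1 mu2) v1 p 1 /\ deriv_along (gckv mu0 mu1 mu2) v2 p 0 /\
  deriv_along (gckv (Ci * mu0) (Ci * mu1) (Ci * mu2)) v1 p 0 /\
  deriv_along (gckv (Ci * mu0) (Ci * mu1) (Ci * mu2)) v2 p 1.
Proof.
  intros v1 v2 HU Hp Hn Hom F1 F2 HW Hriccati Hw.
  assert (Hadapt : forall (X : R * R -> R * R) (v : C), cderiv_along X om p (w' * v) ->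
            deriv_along X v1 p (2 * Re v) /\ deriv_along X v2 p (2 * Im v)).
  { intros X v HX.
    destruct (dir_deriv_exists v1 p (X p) F1) as [d1 H1].
    destruct (dir_deriv_exists v2 p (X p) F2) as [d2 H2].
    destruct (dir_deriv_through_coordinate U om zeta W p (X p) w' v d1 d2
                HU Hp Hom HW Hw HX H1 H2) as [<- <-].
    split; assumption. }
  rewrite <- (Hom p Hp) in Hriccati.
  destruct (Hadapt (gckv mu0 mu1 mu2) (/ RtoC 2)) as [A1 A2].
  { eapply is_cderive_eq; [exact (gckv_canonical_in_frame p Hn)|].
    rewrite <- Hriccati. field. }
  destruct (Hadapt (gckv (Ci * mu0) (Ci * mu1) (Ci * mu2)) (Ci * / RtoC 2)) as [B1 B2].
  { eapply is_cderive_eq; [exact (gckv_perp_in_frame p Hn)|].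
    rewrite <- Hriccati. field. }
  split; [|split; [|split]].
  - replace 1%R with (2 * Re (/ RtoC 2))%R; [exact A1 | simpl; field].
  - replace 0%R with (2 * Im (/ RtoC 2))%R; [exact A2 | simpl; field].
  - replace 0%R with (2 * Re (Ci * / RtoC 2))%R; [exact B1 | simpl; field].
  - replace 1%R with (2 * Im (Ci * / RtoC 2))%R; [exact B2 | simpl; field].
Qed.

Lemma metric_in_adapted_coordinates (U : R * R -> Prop) (zeta : R * R -> C) (W : C -> C)
    (p : R * R) (w' : C) (u0 u1 u2 u3 fp fm f2 f3 : R) :
  let v1 := fun q : R * R => (2 * Re (zeta q))%R in
  let v2 := fun q : R * R => (2 * Im (zeta q))%R in
  let u' := uprime alp bet gam del u0 u1 u2 u3 in
  let w := W (zeta p) in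
  open U -> U p -> gam * zc p + del <> 0 -> (forall q, U q -> om q = W (zeta q)) ->
  is_holo_derive W (zeta p) w' -> w' <> 0 ->
  scaled_hermitian_monomials fp fm f2 f3 w w' ->
  Omega u0 u1 u2 u3 (zc p) <> 0 ->
  forall (a : R * R) (d1 d2 : R), dir_deriv v1 p a d1 -> dir_deriv v2 p a d2 ->
    RtoC (fst a ^ 2 + snd a ^ 2)%R / Omega u0 u1 u2 u3 (zc p) ^ 2
    = RtoC (d1 ^ 2 + d2 ^ 2)%R /
      ((u' 0%nat - u' 1%nat) * RtoC fp + (u' 0%nat + u' 1%nat) * RtoC fm
       + u' 2%nat * RtoC f2 + u' 3%nat * RtoC f3) ^ 2.
Proof.
  intros v1 v2 u' w HU Hp Hn Hom HW Hw [G (Ep & Em & E2 & E3 & HG)] HO a d1 d2 H1 H2.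
  set (v := zc a / (gam * zc p + del) ^ 2 / w').
  destruct (dir_deriv_through_coordinate U om zeta W p a w' v d1 d2 HU Hp Hom HW Hw)
    as [-> ->]; try assumption.
  { eapply is_cderive_eq; [exact (is_cderive_moebius_line alp bet gam del p a Hn)|].
    rewrite frame_det. unfold v. field. split; assumption. }
  rewrite (Omega_moebius alp bet gam del (zc p) u0 u1 u2 u3 frame_det Hn) in HO |- *.
  assert (Hden : (u' 0%nat - u' 1%nat) * RtoC fp + (u' 0%nat + u' 1%nat) * RtoC fm
                 + u' 2%nat * RtoC f2 + u' 3%nat * RtoC f3
                 = uprime_form alp bet gam del u0 u1 u2 u3 (om p) * G).
  { rewrite Ep, Em, E2, E3. unfold w. rewrite <- (Hom p Hp).
    unfold uprime_form, hermitian_form, u'. ring. }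
  rewrite Hden. apply (metric_ratio a v w'); try assumption.
  - intros Z. apply HO. unfold om in Z. cbv beta in Z. rewrite Z. ring.
  - unfold v. field. split; assumption.
Qed.

End CanonicalFrame.

Theorem theorem8p1 (mu0 mu1 mu2 gam del : C) :
  / RtoC 2 * del ^ 2 * mu2 - gam * del * mu1 + gam ^ 2 * mu0 = RtoC 1 ->
  let alp := / RtoC 2 * (del * mu2 - gam * mu1) in
  let bet := / RtoC 2 * del * mu1 - gam * mu0 in
  let xi := gckv mu0 mu1 mu2 in
  let m0' := mu0p mu0 mu1 mu2 in
  let om := fun p : R * R => (alp * zc p + bet) / (gam * zc p + del) in
  (* (i) in the coordinate omega, xi = (mu0' + om^2) d_om + c.c. *)
  (forall p : R * R, gam * zc p + del <> RtoC 0 ->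
     cderiv_along xi om p (m0' + om p ^ 2)) /\
  (* (ii) uniqueness of canonical coordinates up to the stated Moebius maps *)
  (forall a b c d : C, a * d - b * c <> RtoC 0 ->
     let om' := fun p : R * R => (a * om p + b) / (c * om p + d) in
     let dom := fun p : R * R => gam * zc p + del <> RtoC 0 /\ c * om p + d <> RtoC 0 in
     (exists c0 : C, forall p : R * R, dom p -> cderiv_along xi om' p (c0 + om' p ^ 2)) ->
     exists gam' del' : C,
       del' ^ 2 + m0' * gam' ^ 2 = RtoC 1 /\
       forall p : R * R, dom p ->
         gam' * om p + del' <> RtoC 0 /\
         om' p = (del' * om p - gam' * m0') / (gam' * om p + del')) /\
  (* (iii) and (iv) *)
  (forall (Q theta : R),
     (0 <= Q)%R -> (Q = 0%R \/ (0 <= theta < PI)%R) ->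
     RtoC 4 * m0' = RtoC Q * cexp (0%R, (- 2 * theta)%R) ->
     forall (U : R * R -> Prop) (zeta : R * R -> C),
       open U ->
       let v1 := fun q : R * R => (2 * Re (zeta q))%R in
       let v2 := fun q : R * R => (2 * Im (zeta q))%R in
       (forall p : R * R, U p ->
          gam * zc p + del <> RtoC 0 /\
          omega_of_zeta_defined Q theta (zeta p) /\
          om p = omega_of_zeta Q theta (zeta p) /\
          ex_filterdiff v1 (locally p) /\ ex_filterdiff v2 (locally p)) ->
       (* (iii): xi = d_{v1}, xi_perp = d_{v2} *)
       (forall p : R * R, U p ->
          deriv_along xi v1 p 1 /\ deriv_along xi v2 p 0 /\
          deriv_along (gckv (Ci * mu0) (Ci * mu1) (Ci * mu2)) v1 p 0 /\
          deriv_along (gckv (Ci * mu0) (Ci * mu1) (Ci * mu2)) v2 p 1) /\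
       (* (iv): the metric g_u in the coordinates (v1, v2) *)
       (forall u0 u1 u2 u3 : R,
          (u0, u1, u2, u3) <> (0%R, 0%R, 0%R, 0%R) ->
          let u' := uprime alp bet gam del u0 u1 u2 u3 in
          forall p : R * R, U p ->
            Omega u0 u1 u2 u3 (zc p) <> RtoC 0 ->
            let w1 := v1 p in let w2 := v2 p in
            let den := (u' 0%nat - u' 1%nat) * RtoC (f_plus Q theta w1 w2)
                       + (u' 0%nat + u' 1%nat) * RtoC (f_minus Q theta w1 w2)
                       + u' 2%nat * RtoC (f_2 Q theta w1 w2)
                       + u' 3%nat * RtoC (f_3 Q theta w1 w2) in
            forall (a : R * R) (d1 d2 : R),
              dir_deriv v1 p a d1 -> dir_deriv v2 p a d2 ->
              RtoC (fst a ^ 2 + snd a ^ 2)%R / (Omega u0 u1 u2 u3 (zc p)) ^ 2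
              = RtoC (d1 ^ 2 + d2 ^ 2)%R / den ^ 2)).
Proof.
  intros Hnorm alp bet xi m0' om.
  split; [|split].
  - exact (gckv_canonical_in_frame mu0 mu1 mu2 gam del Hnorm).
  - intros a b c d Hdet om' dom [c0 Hc0].
    exact (second_canonical_coordinate mu0 mu1 mu2 gam del Hnorm a b c d c0 Hdet Hc0).
  - intros Q theta HQ _ Hm0 U zeta HU v1 v2 Hcoord.
    assert (Hom : forall q, U q -> om q = omega_of_zeta Q theta (zeta q))
      by (intros q Hq; apply Hcoord, Hq).
    split.
    + intros p Hp. destruct (Hcoord p Hp) as (Hn & Hdef & _ & F1 & F2).
      destruct (omega_of_zeta_riccati Q theta (zeta p) m0' HQ Hm0 Hdef) as [Hric Hw].
      exact (adapted_coordinates mu0 mu1 mu2 gam del Hnorm U zeta _ p _ HU Hp Hn Hom F1 F2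
               (is_holo_derive_omega_of_zeta Q theta (zeta p) Hdef) Hric Hw).
    + intros u0 u1 u2 u3 _ u' p Hp HO w1 w2 den.
      destruct (Hcoord p Hp) as (Hn & Hdef & _ & _ & _).
      destruct (omega_of_zeta_riccati Q theta (zeta p) m0' HQ Hm0 Hdef) as [_ Hw].
      exact (metric_in_adapted_coordinates mu0 mu1 mu2 gam del Hnorm U zeta _ p _ u0 u1 u2 u3
               _ _ _ _ HU Hp Hn Hom (is_holo_derive_omega_of_zeta Q theta (zeta p) Hdef) Hw
               (f_functions_scaled_monomials Q theta (zeta p) Hdef) HO).
Qed.
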